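(* Let $X$ be a compactum, let $n\geq2$, and let $f:X\to X$ be a function. Consider the statements: (1) $f$ is an $F$-system; (2) $F_n(f)$ is an $F$-system; (3) $SF_n(f)$ is an $F$-system. Then (2) and (3) are equivalent, and (2) implies (1).
   Context: A compactum is a nondegenerate compact, perfect, Hausdorff topological space. $F_n(X)$ is the set of nonempty subsets of $X$ with at most $n$ points, with the Vietoris topology; $F_1(X)=\{\{x\}:x\in X\}$; $F_n(f)(A)=f(A)$. $SF_n(X)=F_n(X)/F_1(X)$ is the quotient collapsing $F_1(X)$ to a point, $q$ the quotient map, $F_X=q(F_1(X))$, and $SF_n(f)(\chi)=q(F_n(f)(q^{-1}(\chi)))$ for $\chi\neq F_X$, $SF_n(f)(F_X)=F_X$. A function $g:Z\to Z$ is transitive if for all nonempty open $U,V$ there is $k\in\mathbb{N}$ with $g^k(U)\cap V\neq\emptyset$; totally transitive if $g^m$ is transitive for all $m\in\mathbb{N}$; $g$ is an $F$-system if it is totally transitive and its set of periodic points ($z$ with $g^k(z)=z$ for some $k\in\mathbb{N}$) is dense in $Z$. *)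

From HB Require Import structures.
From mathcomp Require Import all_boot all_order.
From mathcomp Require Import all_classical all_reals all_analysis.
Set Implicit Arguments. Unset Strict Implicit. Unset Printing Implicit Defensive.
Local Open Scope classical_set_scope.

(** Dynamics relative to a given family [op] of open sets of a space [Z]. *)
Section Dyn.
Variables (Z : Type) (op : set Z -> Prop).

Definition transitive_map (g : Z -> Z) : Prop :=
  forall U V : set Z, op U -> op V -> U !=set0 -> V !=set0 ->
    exists k : nat, (0 < k)%N /\ (iter k g @` U) `&` V !=set0.

Definition totally_transitive (g : Z -> Z) : Prop :=
  forall m : nat, (0 < m)%N -> transitive_map (iter m g).

Definition periodic_point (g : Z -> Z) (z : Z) : Prop :=
  exists k : nat, (0 < k)%N /\ iter k g z = z.

Definition dense_wrt (S : set Z) : Prop :=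
  forall O : set Z, O !=set0 -> op O -> O `&` S !=set0.

Definition F_system (g : Z -> Z) : Prop :=
  totally_transitive g /\ dense_wrt (periodic_point g).
End Dyn.

Definition compactum (X : topologicalType) : Prop :=
  [/\ exists x y : X, x <> y, compact [set: X], perfect_set [set: X]
    & hausdorff_space X].

Section Hyperspace.
Variable X : topologicalType.

Definition Fn_pred (n : nat) (A : set X) : Prop :=
  A !=set0 /\ exists s : seq X, (size s <= n)%N /\ A = [set x | x \in s].

Definition Fn (n : nat) := {A : set X | Fn_pred n A}.

(* Vietoris topology on F_n(X): generated by the subbase
   <U>+ = {A | A `<=` U} and <U>- = {A | A meets U}, U open in X.
   S is open iff each of its points has a basic neighbourhood (finite
   intersection of subbasic sets) inside S. *)
Definition vietoris_open (n : nat) (S : set (Fn n)) : Prop :=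
  forall A : Fn n, S A ->
    exists (W : set X) (Us : seq (set X)),
      [/\ open W, (forall U, U \in Us -> open U),
          sval A `<=` W, (forall U, U \in Us -> sval A `&` U !=set0)
        & (forall B : Fn n, sval B `<=` W ->
             (forall U, U \in Us -> sval B `&` U !=set0) -> S B)].

Lemma Fn_pred_image (n : nat) (f : X -> X) (A : set X) :
  Fn_pred n A -> Fn_pred n (f @` A).
Proof.
move=> [[x Ax] [s [hs eA]]]; subst A; split; first by exists (f x); exists x.
exists (map f s); split; first by rewrite size_map.
apply/seteqP; split => y /=.
- by move=> [z zs <-]; apply/mapP; exists z.
- by move=> /mapP [z zs ->]; exists z.
Qed.

Definition Fn_map (n : nat) (f : X -> X) (A : Fn n) : Fn n :=
  exist _ (f @` sval A) (Fn_pred_image f (svalP A)).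

(* SF_n(X) = F_n(X)/F_1(X): concretely, the point F_X (None) together with
   the elements of F_n(X) having at least two points (Some A). *)
Definition SFn_pred (n : nat) (A : set X) : Prop :=
  Fn_pred n A /\ exists x y, [/\ A x, A y & x <> y].

Definition SFn (n : nat) := option {A : set X | SFn_pred n A}.

Definition q_map (n : nat) (A : Fn n) : SFn n :=
  match pselect (exists x y, [/\ sval A x, sval A y & x <> y]) with
  | left h => Some (exist _ (sval A) (conj (svalP A) h))
  | right _ => None
  end.

Definition SF_open (n : nat) (S : set (SFn n)) : Prop :=
  @vietoris_open n (@q_map n @^-1` S).

(* SF_n(f)(chi) = q(F_n(f)(q^{-1}(chi))) for chi <> F_X; SF_n(f)(F_X) = F_X *)
Definition SFn_map (n : nat) (f : X -> X) (c : SFn n) : SFn n :=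
  match c with
  | None => None
  | Some A => @q_map n (@Fn_map n f (exist _ (sval A) (proj1 (svalP A))))
  end.
End Hyperspace.

From mathcomp Require Import all_boot all_order.
From mathcomp Require Import all_classical all_reals all_analysis.
Set Implicit Arguments.
Unset Strict Implicit.
Unset Printing Implicit Defensive.
Local Open Scope classical_set_scope.

(* The quotient map q : F_n(X) -> SF_n(X) semiconjugates F_n(f)
   to SF_n(f) and is onto and continuous, so SF_n(f) inherits being an
   F-system.  Conversely, X being perfect and Hausdorff, every nonempty open
   subset of F_n(X) contains a nonempty open set of sets with at least two
   points, separated by disjoint open sets; q is injective there and maps it
   onto an open set, which pulls transitivity and periodic points back.
   Finally, the boxes {A | A ⊆ U} carry transitivity from F_n(f) down to f,
   and a periodic finite set A ⊆ U is mapped into itself by some f^k, so by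
   pigeonhole it contains an f-periodic point. *)

Lemma iter_semiconj (T U : Type) (q : T -> U) (g : T -> T) (h : U -> U) :
  (forall x, q (g x) = h (q x)) -> forall k x, q (iter k g x) = iter k h (q x).
Proof. by move=> qgh; elim=> //= k IHk x; rewrite qgh IHk. Qed.

Lemma iter_image (T : Type) (g : T -> T) (k : nat) (A : set T) :
  iter k (fun B => g @` B) A = iter k g @` A.
Proof. by elim: k => [|k /= ->]; rewrite ?image_id ?image_comp. Qed.

Lemma periodic_point_iter (T : Type) (g : T -> T) (k : nat) (x : T) :
  (0 < k)%N -> periodic_point (iter k g) x -> periodic_point g x.
Proof.
move=> k0 [m [m0 gx]]; exists (m * k)%N.
by rewrite muln_gt0 m0 k0 iterM.
Qed.

Lemma periodic_point_in_orbit (T : eqType) (g : T -> T) (s : seq T) (a : T) :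
  (forall i, iter i g a \in s) -> exists i, periodic_point g (iter i g a).
Proof.
move=> orbit_s; pose t := mkseq (fun i => iter i g a) (size s).+1.
have /(uniqPn a) [i [j [ij jt]]] : ~~ uniq t.
  have t_s : {subset t <= s} by move=> _ /mapP [i _ ->].
  by apply/negP => /uniq_leq_size /(_ t_s); rewrite size_mkseq ltnn.
rewrite size_mkseq in jt; rewrite !nth_mkseq ?(ltn_trans ij) // => gij.
exists i, (j - i)%N; split; first by rewrite subn_gt0.
by rewrite -iterD subnK ?(ltnW ij).
Qed.

Section FSystemTransfer.
Variables (T U : Type) (opT : set T -> Prop) (opU : set U -> Prop).
Variables (q : T -> U) (g : T -> T) (h : U -> U).
Hypothesis q_semiconj : forall x, q (g x) = h (q x).

Let q_iter := iter_semiconj q_semiconj.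
Let q_iter_iter m := iter_semiconj (q_iter m).

Lemma F_system_factor :
  (forall u, exists x, q x = u) -> (forall O, opU O -> opT (q @^-1` O)) ->
  F_system opT g -> F_system opU h.
Proof.
move=> q_surj q_cont [ttg dpg].
have preimage_neq0 (O : set U) : O !=set0 -> q @^-1` O !=set0.
  by move=> [u Ou]; have [x qx] := q_surj u; exists x; rewrite /= qx.
split.
- move=> m m0 V W oV oW /preimage_neq0 V0 /preimage_neq0 W0.
  have [k [k0 [_ [[x Vqx <-] Wqy]]]] :=
    ttg m m0 _ _ (q_cont _ oV) (q_cont _ oW) V0 W0.
  exists k; split => //; exists (q (iter k (iter m g) x)); split => //.
  by exists (q x); rewrite // q_iter_iter.
- move=> O /preimage_neq0 O0 oO.
  have [x [Oqx [k [k0 gx]]]] := dpg _ O0 (q_cont _ oO).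
  by exists (q x); split => //; exists k; rewrite -q_iter gx.
Qed.

Lemma F_system_lift :
  (forall O, opT O -> O !=set0 -> exists O',
     [/\ opT O', O' `<=` O, O' !=set0, opU (q @` O')
       & forall x y, O' y -> q x = q y -> x = y]) ->
  F_system opU h -> F_system opT g.
Proof.
move=> refine_open [tth dph].
have image_neq0 (O : set T) : O !=set0 -> q @` O !=set0.
  by move=> [x Ox]; exists (q x), x.
split.
- move=> m m0 V W oV oW V0 W0.
  have [V1 [oV1 V1V /image_neq0 V10 oqV1 _]] := refine_open _ oV V0.
  have [W1 [oW1 W1W /image_neq0 W10 oqW1 W1inj]] := refine_open _ oW W0.
  have [k [k0 [_ [[_ [x V1x <-] <-] [y W1y qy]]]]] :=
    tth m m0 _ _ oqV1 oqW1 V10 W10.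
  exists k; split => //; exists (iter k (iter m g) x); split.
    by exists x => //; apply: V1V.
  rewrite -q_iter_iter in qy.
  by rewrite (W1inj _ _ W1y (esym qy)); apply: W1W.
- move=> O O0 oO.
  have [Q [oQ QO /image_neq0 Q0 oqQ Qinj]] := refine_open _ oO O0.
  have [_ [[x Qx <-] [k [k0 hx]]]] := dph _ Q0 oqQ.
  exists x; split; first exact: QO.
  by exists k; split => //; apply: Qinj Qx _; rewrite q_iter.
Qed.

End FSystemTransfer.

Section Hyperspace.
Variables (X : topologicalType) (n : nat).

Lemma Fn_ext (A B : Fn X n) : sval A = sval B -> A = B.
Proof. by case: A => a pa; case: B => b pb /= ab; apply: eq_exist. Qed.

Lemma Fn_pred_seq (s : seq X) :
  s != [::] -> (size s <= n)%N -> Fn_pred n [set x | x \in s].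
Proof.
case: s => // x s _ sn; split; first by exists x; rewrite /= mem_head.
by exists (x :: s).
Qed.

Lemma sval_iter_Fn_map (f : X -> X) (k : nat) (A : Fn X n) :
  sval (iter k (Fn_map f) A) = iter k f @` sval A.
Proof. by rewrite (iter_semiconj (h := fun B => f @` B)) ?iter_image. Qed.

Definition vietoris_basic (W : set X) (Us : seq (set X)) : set (Fn X n) :=
  [set A | sval A `<=` W /\ forall U, U \in Us -> sval A `&` U !=set0].

Lemma vietoris_basic_open (W : set X) (Us : seq (set X)) :
  open W -> (forall U, U \in Us -> open U) ->
  vietoris_open (vietoris_basic W Us).
Proof. by move=> oW oUs A [AW AUs]; exists W, Us. Qed.

Lemma vietoris_box_neq0 (W : set X) :
  (0 < n)%N -> W !=set0 -> vietoris_basic W [::] !=set0.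
Proof.
move=> n0 [w Ww].
exists (exist _ _ (@Fn_pred_seq [:: w] isT n0)); split => // x /=.
by rewrite inE => /eqP ->.
Qed.

Lemma vietoris_box_open (W : set X) :
  open W -> vietoris_open (vietoris_basic W [::]).
Proof. by move=> oW; apply: vietoris_basic_open. Qed.

Lemma totally_transitive_of_Fn_map (f : X -> X) : (0 < n)%N ->
  totally_transitive (@vietoris_open X n) (Fn_map f) ->
  totally_transitive open f.
Proof.
move=> n0 ttF m m0 U V oU oV U0 V0.
have [k [k0 [_ [[A [AU _] <-] [AV _]]]]] := ttF m m0 _ _
  (vietoris_box_open oU) (vietoris_box_open oV)
  (vietoris_box_neq0 n0 U0) (vietoris_box_neq0 n0 V0).
have [a Aa] := (svalP A).1.
exists k; split => //; exists (iter k (iter m f) a); split.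
  by exists a => //; apply: AU.
by apply: AV; rewrite -iterM sval_iter_Fn_map; exists a; rewrite ?iterM.
Qed.

Lemma dense_periodic_of_Fn_map (f : X -> X) : (0 < n)%N ->
  dense_wrt (@vietoris_open X n) (periodic_point (Fn_map f)) ->
  dense_wrt open (periodic_point f).
Proof.
move=> n0 dpF O O0 oO.
have [A [[AO _] [k [k0 fkA]]]] :=
  dpF _ (vietoris_box_neq0 n0 O0) (vietoris_box_open oO).
have A_inv x : sval A x -> sval A (iter k f x).
  by move=> Ax; rewrite -fkA sval_iter_Fn_map; exists x.
have [[a Aa] [s [_ As]]] := svalP A.
have orbit_A i : sval A (iter i (iter k f) a) by elim: i => //= i /A_inv.
have [i /(periodic_point_iter k0) fi] :
    exists i, periodic_point (iter k f) (iter i (iter k f) a).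
  apply: (periodic_point_in_orbit (s := s)) => i.
  by have := orbit_A i; rewrite As.
by exists (iter i (iter k f) a); split => //; apply: AO.
Qed.

Definition has_two_points (A : set X) : Prop :=
  exists x y, [/\ A x, A y & x <> y].

Lemma has_two_pointsN_eq (A : set X) (x y : X) :
  ~ has_two_points A -> A x -> A y -> x = y.
Proof. by move=> A1 Ax Ay; apply: contrapT => xy; apply: A1; exists x, y. Qed.

Lemma q_map_Fn_map (f : X -> X) (A : Fn X n) :
  q_map (Fn_map f A) = SFn_map f (q_map A).
Proof.
rewrite {2}/q_map; case: pselect => [A2|A1] /=.
  by congr (q_map (Fn_map f _)); apply: Fn_ext.
rewrite /q_map; case: pselect => // -[u [v [[x Ax fx] [y Ay fy] uv]]].
by exfalso; apply: uv; rewrite -fx -fy (has_two_pointsN_eq A1 Ax Ay).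
Qed.

Lemma q_map_surj (x0 : X) :
  (0 < n)%N -> forall c : SFn X n, exists A, q_map A = c.
Proof.
move=> n0 [[B [B1 B2]]|].
  exists (exist _ B B1); rewrite /q_map.
  by case: pselect => [B2'|[]] //; congr Some; apply: eq_exist.
exists (exist _ _ (@Fn_pred_seq [:: x0] isT n0)); rewrite /q_map.
by case: pselect => // -[x [y [/= + + []]]]; rewrite !inE => /eqP -> /eqP ->.
Qed.

Lemma q_map_inj (A B : Fn X n) :
  has_two_points (sval B) -> q_map A = q_map B -> A = B.
Proof.
move=> B2; rewrite /q_map; case: pselect => A2; case: pselect => // B2'.
by case; apply: Fn_ext.
Qed.

Lemma SF_open_image (S : set (Fn X n)) :
  vietoris_open S -> (forall A, S A -> has_two_points (sval A)) ->
  SF_open (@q_map X n @` S).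
Proof.
move=> oS S2; rewrite /SF_open.
suff -> : @q_map X n @^-1` (@q_map X n @` S) = S by [].
apply/seteqP; split=> [A [B SB qBA] | A SA]; last by exists A.
by rewrite (q_map_inj (S2 _ SB) (esym qBA)).
Qed.

Lemma vietoris_basic_has_two_points (W : set X) (Us : seq (set X)) :
  (2 <= n)%N -> perfect_set [set: X] ->
  open W -> (forall U, U \in Us -> open U) -> vietoris_basic W Us !=set0 ->
  exists2 A, vietoris_basic W Us A & has_two_points (sval A).
Proof.
move=> n2 perfX oW oUs [A [AW AUs]].
have [A2|A1] := pselect (has_two_points (sval A)); first by exists A.
have [a Aa] := (svalP A).1.
pose G := W `&` \bigcap_(U in [set` Us]) U.
have oG : open G.
  apply: openI => //; rewrite bigcap_seq big_seq.
  by apply: big_ind; [exact: openT | exact: openI | exact: oUs].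
have Ga : G a.
  split; first exact: AW.
  by move=> U /AUs [b [Ab Ub]]; rewrite (has_two_pointsN_eq A1 Aa Ab).
have [x [y [Gx Gy /eqP xy]]] := perfectTP_ex.1 perfX G oG (ex_intro _ a Ga).
exists (exist _ _ (@Fn_pred_seq [:: x; y] isT n2)); last first.
  by exists x, y; split; rewrite //= !inE eqxx ?orbT.
split=> [z | U Us_U] /=.
  by rewrite !inE => /orP [] /eqP ->; [exact: Gx.1 | exact: Gy.1].
by exists x; split; [rewrite /= mem_head | exact: Gx.2].
Qed.

Lemma vietoris_open_refine (S : set (Fn X n)) :
  (2 <= n)%N -> hausdorff_space X -> perfect_set [set: X] ->
  vietoris_open S -> S !=set0 ->
  exists S', [/\ vietoris_open S', S' `<=` S, S' !=set0
    & forall A, S' A -> has_two_points (sval A)].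
Proof.
move=> n2 hX perfX oS [A SA].
have [W [Us [oW oUs AW AUs WUs_S]]] := oS A SA.
have [B [BW BUs] [x [y [Bx By xy]]]] :=
  vietoris_basic_has_two_points n2 perfX oW oUs (ex_intro _ A (conj AW AUs)).
move: hX; rewrite open_hausdorff => /(_ x y).
have /[swap]/[apply] : x != y by apply/eqP.
move=> [[Gx Gy] /= [xGx yGy] [oGx oGy /eqP GxGy0]].
rewrite in_setE in xGx; rewrite in_setE in yGy.
exists (vietoris_basic W [:: Gx, Gy & Us]); split.
- apply: vietoris_basic_open => // U.
  by rewrite !in_cons => /or3P [/eqP -> | /eqP -> | /oUs].
- move=> C [CW CUs]; apply: WUs_S => // U Us_U.
  by apply: CUs; rewrite !in_cons Us_U !orbT.
- exists B; split => // U.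
  rewrite !in_cons => /or3P [/eqP -> | /eqP -> | /BUs //].
    by exists x.
  by exists y.
- move=> C [_ CUs].
  have [u [Cu Gxu]] := CUs Gx (mem_head _ _).
  have [v [Cv Gyv]] : sval C `&` Gy !=set0.
    by apply: CUs; rewrite !in_cons eqxx orbT.
  exists u, v; split => // uv; subst v.
  by have : (Gx `&` Gy) u by []; rewrite GxGy0.
Qed.

End Hyperspace.

Theorem theorem19 (X : topologicalType) (n : nat) (f : X -> X) :
  compactum X -> (2 <= n)%N ->
  (F_system (@vietoris_open X n) (Fn_map f) <->
     F_system (@SF_open X n) (SFn_map f)) /\
  (F_system (@vietoris_open X n) (Fn_map f) -> F_system (@open X) f).
Proof.
move=> [[x0 _] _ perfX hX] n2; have n0 : (0 < n)%N := ltnW n2.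
have q_semiconj := @q_map_Fn_map X n f.
split; first split.
- exact: F_system_factor q_semiconj (q_map_surj x0 n0) (fun _ oO => oO).
- apply: F_system_lift q_semiconj _ => S oS S0.
  have [S' [oS' S'S S'0 S'2]] := vietoris_open_refine n2 hX perfX oS S0.
  exists S'; split => //; first exact: SF_open_image.
  by move=> A B /S'2 /q_map_inj; apply.
- move=> [ttF dpF]; split.
  + by apply: (totally_transitive_of_Fn_map (n := n)) ttF.
  + by apply: (dense_periodic_of_Fn_map (n := n)) dpF.
Qed.
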